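(* Let $q$ be a prime power and $\mathcal{L}$ a non-empty set of lines of $\mathrm{PG}(n,q)$ satisfying (Pt), (Pl), (Sd) and (To) (see context). Suppose $\mathcal{L}$ contains a pentagon with vertices $A,B,C,D,E$ (so $AB,BC,CD,DE,EA\in\mathcal{L}$), and let $U=\langle A,B,C,D,E\rangle$. Then the only $(q+1)$-$U$-points on the line $BE$ of $\mathrm{PG}(n,q)$ are $B$ and $E$.
   Context: (Pt): every point of $\mathrm{PG}(n,q)$ lies on $0$ or $q+1$ lines of $\mathcal{L}$. (Pl): every plane contains $0$, $1$ or $q+1$ lines of $\mathcal{L}$. (Sd): every solid ($3$-dimensional subspace) contains $0$, $1$, $q+1$ or $2q+1$ lines of $\mathcal{L}$. (To): $|\mathcal{L}|\le q^5+q^4+q^3+q^2+q+1$. A pentagon of $\mathcal{L}$ with vertices $A,B,C,D,E$ is a set of five pairwise distinct points such that the lines $AB,BC,CD,DE,EA$ all belong to $\mathcal{L}$ and are pairwise distinct. For a subspace $U$, a point $P$ is a $(q+1)$-$U$-point if exactly $q+1$ lines of $\mathcal{L}$ pass through $P$ and are contained in $U$. *)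

(* Projective space PG(n,q) = subspaces of F^(n+1), F a finite
   field with q = #|F| elements. A projective subspace is represented by its
   set of vectors (a linear subspace of 'rV[F]_(n.+1)). *)
From HB Require Import structures.
From mathcomp Require Import all_boot all_order all_algebra.
Set Implicit Arguments. Unset Strict Implicit. Unset Printing Implicit Defensive.
Import GRing.Theory.
Local Open Scope ring_scope.

Section PG.
Variables (F : finFieldType) (n : nat).
Notation V := 'rV[F]_(n.+1).

Definition pspan (S : {set V}) : 'M[F]_(n.+1) := (\sum_(v in S) <<v>>)%MS.

Definition pclosure (S : {set V}) : {set V} := [set v | (v <= pspan S)%MS].

(* S is a projective subspace of projective dimension k
   (i.e. a linear subspace of vector dimension k+1) *)
Definition is_psub (k : nat) (S : {set V}) : bool :=
  (S == pclosure S) && (\rank (pspan S) == k.+1).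

Definition is_point := is_psub 0.
Definition is_line  := is_psub 1.
Definition is_plane := is_psub 2.
Definition is_solid := is_psub 3.
End PG.

From mathcomp Require Import all_boot all_order all_algebra zify.
Set Implicit Arguments. Unset Strict Implicit. Unset Printing Implicit Defensive.

(* Two lines of L through a common point span a plane whose lines of L are exactly the
   q+1 lines through that point: a line through it outside the plane would force a solid
   with too many lines.  Suppose P <> B, E.  Then P lies neither in the pencil plane
   <BC, CD> of C (else E, hence DE, would lie in it and DE would pass through C) nor in
   the pencil plane <CD, DE> of D.  All lines through P lie in U, of dimension at most 4,
   so the pencil plane of P meets that of C in a point W; W lies on a line through P
   and on a line through C, hence has a pencil of its own.  The pencils at C, D and W
   meet pairwise in at most one line and all lie in the solid spanned by <BC, CD> and P,
   which would thus contain at least 3q > 2q + 1 lines, contradicting (Sd). *)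

Section RankFacts.
Variables (F : fieldType) (N : nat).

Lemma submx_of_rank_leq m1 m2 (A : 'M[F]_(m1, N)) (B : 'M[F]_(m2, N)) :
  (A <= B)%MS -> \rank B <= \rank A -> (B <= A)%MS.
Proof. by move=> sAB leBA; rewrite -(mxrank_leqif_sup sAB).2 eqn_leq leBA mxrankS. Qed.

Lemma mxrank_adds_point m1 m2 (M : 'M[F]_(m1, N)) (p : 'M[F]_(m2, N)) :
  \rank p = 1 -> ~~ (p <= M)%MS -> \rank (M + p)%MS = (\rank M).+1.
Proof.
move=> rp pM; have := mxrank_sum_cap M p; rewrite rp addn1.
suff -> : \rank (M :&: p)%MS = 0 by rewrite addn0.
apply: contraNeq pM; rewrite -lt0n => capM.
have pcap : (p <= M :&: p)%MS by rewrite submx_of_rank_leq ?capmxSr ?rp.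
by apply: submx_trans pcap (capmxSl _ _).
Qed.

Lemma line_sub_points m1 m2 m3 (x : 'M[F]_(m1, N)) (y : 'M[F]_(m2, N))
    (l : 'M[F]_(m3, N)) :
  \rank x = 1 -> \rank y = 1 -> ~~ (y <= x)%MS -> \rank l <= 2 ->
  (x <= l)%MS -> (y <= l)%MS -> (l <= x + y)%MS.
Proof.
move=> rx ry yx rl xl yl; apply: submx_of_rank_leq; first by rewrite addsmx_sub xl.
by rewrite mxrank_adds_point ?rx.
Qed.

Lemma point_exchange m1 m2 m3 (b : 'M[F]_(m1, N)) (e : 'M[F]_(m2, N))
    (p : 'M[F]_(m3, N)) :
  \rank b = 1 -> \rank e = 1 -> \rank p = 1 -> ~~ (p <= b)%MS ->
  (p <= b + e)%MS -> (e <= b + p)%MS.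
Proof.
move=> rb re rp pb pbe; apply: submx_trans (addsmxSr b e) _.
apply: line_sub_points; rewrite ?addsmxSl //.
by have [le _] := mxrank_adds_leqif b e; rewrite rb re in le.
Qed.

Lemma mxrank_capmx_lt m1 m2 (M : 'M[F]_(m1, N)) (A : 'M[F]_(m2, N)) :
  ~~ (M <= A)%MS -> \rank (M :&: A)%MS < \rank M.
Proof. by rewrite (ltn_leqif (mxrank_leqif_sup (capmxSl M A))) sub_capmx submx_refl. Qed.

Section Hyperplane.
Variables (m1 m2 m3 : nat) (K : 'M[F]_(m1, N)) (M : 'M[F]_(m2, N)).
Variable P : 'M[F]_(m3, N).
Hypotheses (KM : (K <= M)%MS) (KP : (K <= P)%MS) (MP : ~~ (M <= P)%MS).
Hypotheses (rM : \rank M = (\rank K).+1) (rP : \rank P = \rank M).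

Lemma capmx_hyper : (M :&: P :=: K)%MS.
Proof.
have Kcap : (K <= M :&: P)%MS by rewrite sub_capmx KM.
apply/eqmxP/andP; split=> //; apply: submx_of_rank_leq Kcap _.
by rewrite -ltnS -rM mxrank_capmx_lt.
Qed.

Lemma mxrank_adds_hyper : \rank (M + P)%MS = (\rank M).+1.
Proof.
have := mxrank_sum_cap M P; rewrite capmx_hyper rP rM.
by rewrite -addSnnS => /eqP; rewrite eqn_add2r => /eqP.
Qed.

End Hyperplane.

Lemma mxrank_adds_line m1 m2 m3 (x : 'M[F]_(m1, N)) (A : 'M[F]_(m2, N))
    (M : 'M[F]_(m3, N)) :
  \rank x = 1 -> (x <= A)%MS -> (x <= M)%MS -> \rank M = 2 -> ~~ (M <= A)%MS ->
  \rank (A + M)%MS = (\rank A).+1.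
Proof.
move=> rx xA xM rM MA; have := mxrank_sum_cap A M; rewrite rM.
suff -> : \rank (A :&: M)%MS = 1 by rewrite addn1 addn2 => -[].
have xcap : (x <= A :&: M)%MS by rewrite sub_capmx xA xM.
by have := mxrankS xcap; have := mxrank_capmx_lt MA; rewrite capmxC rM rx; lia.
Qed.

End RankFacts.

Section RowSpaceSets.
Variables (F : finFieldType) (n : nat).
Local Notation V := 'rV[F]_(n.+1).

Definition mxset k (M : 'M[F]_(k, n.+1)) : {set V} := [set v : V | (v <= M)%MS].

Lemma mem_pspan (S : {set V}) v : v \in S -> (v <= pspan S)%MS.
Proof. by move=> vS; apply: (sumsmx_sup v) => //; rewrite genmxE. Qed.

Lemma pspan_subP k (S : {set V}) (M : 'M_(k, n.+1)) :
  (forall v, v \in S -> (v <= M)%MS) -> (pspan S <= M)%MS.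
Proof. by move=> SM; apply/sumsmx_subP => v vS; rewrite genmxE SM. Qed.

Lemma pspanS (S T : {set V}) : S \subset T -> (pspan S <= pspan T)%MS.
Proof. by move/subsetP => ST; apply: pspan_subP => v /ST; apply: mem_pspan. Qed.

Lemma pspan_mxset k (M : 'M_(k, n.+1)) : (pspan (mxset M) :=: M)%MS.
Proof.
apply/eqmxP/andP; split; first by apply: pspan_subP => v; rewrite inE.
by apply/row_subP => i; apply: mem_pspan; rewrite inE row_sub.
Qed.

Lemma mxset_subset k1 k2 (M : 'M_(k1, n.+1)) (N : 'M_(k2, n.+1)) :
  (mxset M \subset mxset N) = (M <= N)%MS.
Proof.
apply/subsetP/idP => [MN | MN v]; last by rewrite !inE => /submx_trans; apply.
by apply/row_subP => i; have := MN (row i M); rewrite !inE row_sub => /(_ isT).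
Qed.

Lemma pspanU (S T : {set V}) : (pspan (S :|: T) :=: pspan S + pspan T)%MS.
Proof.
apply/eqmxP/andP; split.
  by apply: pspan_subP => v /setUP[] /mem_pspan vS;
    [apply: submx_trans vS (addsmxSl _ _) | apply: submx_trans vS (addsmxSr _ _)].
by rewrite addsmx_sub !pspanS // (subsetUl, subsetUr).
Qed.

Lemma psubE k (S : {set V}) : is_psub k S -> S = mxset (pspan S).
Proof. by case/andP => /eqP. Qed.

Lemma psub_rank k (S : {set V}) : is_psub k S -> \rank (pspan S) = k.+1.
Proof. by case/andP => _ /eqP. Qed.

Lemma is_psub_mxset k j (M : 'M_(j, n.+1)) : \rank M = k.+1 -> is_psub k (mxset M).
Proof.
move=> rM; apply/andP; rewrite (pspan_mxset M) rM; split => //.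
by rewrite -/(mxset (pspan (mxset M))) eqEsubset !mxset_subset !(pspan_mxset M) andbb.
Qed.

Lemma psub_subset k j (S : {set V}) (M : 'M_(j, n.+1)) :
  is_psub k S -> (S \subset mxset M) = (pspan S <= M)%MS.
Proof. by move=> kS; rewrite {1}(psubE kS) mxset_subset. Qed.

Lemma card_mxset k (M : 'M_(k, n.+1)) : #|mxset M| = (#|F| ^ \rank M)%N.
Proof.
have -> : mxset M = [set (y *m row_base M)%R | y in [set: 'rV[F]_(\rank M)]].
  apply/setP => v; rewrite inE -(eq_row_base M).
  apply/idP/imsetP => [/submxP[y ->] | [y _ ->]]; last exact: submxMl.
  by exists y; rewrite ?inE.
rewrite card_imset ?cardsT ?card_mx ?mul1n //.
exact: row_free_inj (row_base_free M).
Qed.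

Lemma psub_eq k (S T : {set V}) :
  is_psub k S -> is_psub k T -> (pspan S <= pspan T)%MS -> S = T.
Proof.
move=> kS kT ST; rewrite (psubE kS) (psubE kT); apply/eqP.
by rewrite eqEsubset !mxset_subset ST submx_of_rank_leq // (psub_rank kS) (psub_rank kT).
Qed.

Lemma psub_neq k (S T : {set V}) :
  is_psub k S -> is_psub k T -> S != T -> ~~ (pspan S <= pspan T)%MS.
Proof. by move=> kS kT; apply: contraNN => /(psub_eq kS kT) ->. Qed.

Lemma pspan_pclosureU (S T : {set V}) :
  (pspan (pclosure (S :|: T)) :=: pspan S + pspan T)%MS.
Proof. exact: eqmx_trans (pspan_mxset _) (pspanU _ _). Qed.

Lemma mxrank_pspanU (S T : {set V}) :
  \rank (pspan (S :|: T)) <= \rank (pspan S) + \rank (pspan T).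
Proof. by rewrite (pspanU S T); have [] := mxrank_adds_leqif (pspan S) (pspan T). Qed.

End RowSpaceSets.

Lemma card_bigcup_disjoint (I T : finType) (S : {set I}) (f : I -> {set T}) :
  {in S &, forall i j, i != j -> [disjoint f i & f j]} ->
  #|\bigcup_(i in S) f i| = \sum_(i in S) #|f i|.
Proof.
move=> disjf; rewrite (@big_mkcond _ _ _ _ _ (fun i => i \in S) f) [RHS]big_mkcond.
rewrite -sum1_card partition_disjoint_bigcup => [|i j].
  by apply: eq_bigr => i _; rewrite sum1_card; case: ifP; rewrite ?cards0.
case: ifP => [iS|_]; case: ifP => [jS|_]; first exact: disjf.
all: by rewrite -setI_eq0 ?setI0 ?set0I.
Qed.

Section LineSet.
Variables (F : finFieldType) (n : nat) (L : {set {set 'rV[F]_(n.+1)}}).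
Local Notation V := 'rV[F]_(n.+1).
Local Notation q := #|F|.
Hypothesis L_lines : forall l, l \in L -> is_line l.
Hypothesis L_Pt : forall P, is_point P ->
  #|[set l in L | P \subset l]| \in [:: 0; q.+1].
Hypothesis L_Pl : forall p, is_plane p ->
  #|[set l in L | l \subset p]| \in [:: 0; 1; q.+1].
Hypothesis L_Sd : forall s, is_solid s ->
  #|[set l in L | l \subset s]| \in [:: 0; 1; q.+1; (2 * q).+1].

Definition lines_in k (M : 'M[F]_(k, n.+1)) := [set l in L | (pspan l <= M)%MS].
Definition lines_thru k (x : 'M[F]_(k, n.+1)) := [set l in L | (x <= pspan l)%MS].

Lemma rank_line l : l \in L -> \rank (pspan l) = 2.
Proof. by move/L_lines/psub_rank. Qed.

Lemma line_eq l1 l2 : l1 \in L -> l2 \in L -> (pspan l1 <= pspan l2)%MS -> l1 = l2.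
Proof. by move=> /L_lines l1L /L_lines; apply: psub_eq. Qed.

Lemma line_neq l1 l2 : l1 \in L -> l2 \in L -> l1 != l2 -> ~~ (pspan l1 <= pspan l2)%MS.
Proof. by move=> /L_lines l1L /L_lines; apply: psub_neq. Qed.

Lemma rank_lines_meet k (x : 'M[F]_(k, n.+1)) l1 l2 :
  \rank x = 1 -> l1 \in lines_thru x -> l2 \in lines_thru x -> l1 != l2 ->
  \rank (pspan l1 + pspan l2)%MS = 3.
Proof.
move=> rx /setIdP[l1L xl1] /setIdP[l2L xl2] l12.
by rewrite (mxrank_adds_hyper xl1 xl2 (line_neq l1L l2L l12)) ?rank_line ?rx.
Qed.

Lemma line_span_points k1 k2 (x : 'M[F]_(k1, n.+1)) (y : 'M[F]_(k2, n.+1)) l :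
  l \in L -> \rank x = 1 -> \rank y = 1 -> ~~ (y <= x)%MS ->
  (x <= pspan l)%MS -> (y <= pspan l)%MS -> (pspan l :=: x + y)%MS.
Proof.
move=> lL rx ry yx xl yl; apply/eqmxP/andP; split; last by rewrite addsmx_sub xl.
by rewrite line_sub_points ?rank_line.
Qed.

Lemma lines_inS k1 k2 (M : 'M[F]_(k1, n.+1)) (N : 'M[F]_(k2, n.+1)) :
  (M <= N)%MS -> lines_in M \subset lines_in N.
Proof.
by move=> MN; apply/subsetP => l; rewrite !inE => /andP[-> /submx_trans]; apply.
Qed.

Lemma lines_in_mxset k (M : 'M[F]_(k, n.+1)) :
  [set l in L | l \subset mxset M] = lines_in M.
Proof.
apply/setP => l; rewrite !inE; case lL: (l \in L) => //=.
exact: psub_subset (L_lines lL).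
Qed.

Lemma lines_thru_mxset k (x : 'M[F]_(k, n.+1)) :
  [set l in L | mxset x \subset l] = lines_thru x.
Proof.
apply/setP => l; rewrite !inE; case lL: (l \in L) => //=.
by rewrite {1}(psubE (L_lines lL)) mxset_subset.
Qed.

Lemma card_lines_thru k (x : 'M[F]_(k, n.+1)) l :
  \rank x = 1 -> l \in lines_thru x -> #|lines_thru x| = q.+1.
Proof.
move=> rx xl; have := L_Pt (is_psub_mxset (k := 0) rx).
by rewrite lines_thru_mxset !inE => /orP[] /eqP // /card0_eq /(_ l); rewrite xl.
Qed.

Lemma lines_thru_in_pclosure (P S : {set V}) : is_point P ->
  [set l in L | (P \subset l) && (l \subset pclosure S)] =
  lines_thru (pspan P) :&: lines_in (pspan S).
Proof.
move=> pP; apply/setP => l; rewrite !inE; case lL: (l \in L) => //=.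
by rewrite (psub_subset _ (L_lines lL)) {1}(psubE (L_lines lL)) (psub_subset _ pP).
Qed.

Lemma lines_thru_sub_of_card k1 k2 (x : 'M[F]_(k1, n.+1)) (M : 'M[F]_(k2, n.+1)) :
  \rank x = 1 -> #|lines_thru x :&: lines_in M| = q.+1 ->
  lines_thru x \subset lines_in M /\ #|lines_thru x| = q.+1.
Proof.
move=> rx cxM; have [l /setIP[xl _]] : exists l, l \in lines_thru x :&: lines_in M.
  by apply/card_gt0P; rewrite cxM.
have cx := card_lines_thru rx xl; split=> //.
have : lines_thru x :&: lines_in M == lines_thru x by rewrite eqEcard subsetIl cx cxM leqnn.
by move/eqP <-; apply: subsetIr.
Qed.

Lemma card_lines_in_plane k (M : 'M[F]_(k, n.+1)) l1 l2 :
  \rank M = 3 -> l1 \in lines_in M -> l2 \in lines_in M -> l1 != l2 ->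
  #|lines_in M| = q.+1.
Proof.
move=> rM l1M l2M l12; have : 1 < #|lines_in M| by apply/card_gt1P; exists l1, l2.
have := L_Pl (is_psub_mxset (k := 2) rM).
by rewrite lines_in_mxset !inE => /or3P[] /eqP ->.
Qed.

Lemma card_lines_in_solid k (M : 'M[F]_(k, n.+1)) :
  \rank M = 4 -> #|lines_in M| \in [:: 0; 1; q.+1; (2 * q).+1].
Proof. by move=> rM; rewrite -lines_in_mxset; apply: L_Sd; apply: is_psub_mxset. Qed.

Lemma card_lines_in_le1 k (M : 'M[F]_(k, n.+1)) :
  \rank M <= 2 -> #|lines_in M| <= 1.
Proof.
move=> rM; apply/card_le1_eqP => l1 l2; rewrite !inE => /andP[l1L l1M] /andP[l2L l2M].
apply: (line_eq l2L l1L); apply: submx_trans l2M _.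
by apply: submx_of_rank_leq l1M _; rewrite (rank_line l1L).
Qed.

Lemma card_lines_thru2_le1 k1 k2 (x : 'M[F]_(k1, n.+1)) (y : 'M[F]_(k2, n.+1)) :
  \rank x = 1 -> \rank y = 1 -> ~~ (y <= x)%MS ->
  #|lines_thru x :&: lines_thru y| <= 1.
Proof.
move=> rx ry yx; apply: leq_trans (card_lines_in_le1 (M := (x + y)%MS) _).
  apply/subset_leq_card/subsetP => l; rewrite !inE => /andP[/andP[lL xl] /andP[_ yl]].
  by rewrite lL (line_span_points lL rx ry yx xl yl) submx_refl.
by have [le _] := mxrank_adds_leqif x y; rewrite rx ry in le.
Qed.

Lemma card_lines_off_plane k1 k2 (pi : 'M[F]_(k1, n.+1)) (sigma : 'M[F]_(k2, n.+1)) m :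
  \rank sigma = 4 -> (pi <= sigma)%MS -> #|lines_in pi| = q.+1 ->
  m \in lines_in sigma :\: lines_in pi ->
  #|lines_in sigma :\: lines_in pi| = q.
Proof.
move=> rsigma pisigma cpi /setDP[m_sigma m_pi].
have sub_sigma := lines_inS pisigma.
have : q.+2 <= #|lines_in sigma|.
  have := cardsU1 m (lines_in pi); rewrite m_pi cpi add1n => <-.
  by rewrite subset_leq_card // subUset sub1set m_sigma.
rewrite (cardsDS sub_sigma) cpi.
by have := card_lines_in_solid rsigma; rewrite !inE => /or4P[] /eqP ->; lia.
Qed.

Lemma lines_off_plane_sub k1 k2 (x : 'M[F]_(k1, n.+1)) (pi : 'M[F]_(k2, n.+1)) l m :
  \rank x = 1 -> \rank pi = 3 -> l \in lines_in pi -> m \in L ->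
  (x <= pspan l)%MS -> (x <= pspan m)%MS -> ~~ (pspan m <= pi)%MS ->
  #|lines_in (pi + pspan m)%MS :\: lines_in pi| = q ->
  lines_in (pi + pspan m)%MS :\: lines_in pi \subset lines_in (pspan l + pspan m)%MS.
Proof.
move=> rx rpi /setIdP[lL lpi] mL xl xm mpi cD; set tau := (pspan l + pspan m)%MS.
have lm : l != m by apply: contraNneq mpi => <-.
have rtau : \rank tau = 3 by apply: (rank_lines_meet rx); rewrite ?inE ?lL ?mL.
have tau_pi : (tau :&: pi :=: pspan l)%MS.
  apply: capmx_hyper; rewrite ?addsmxSl ?rtau ?rank_line //.
  by apply: contra mpi; apply: submx_trans (addsmxSr _ _).
have l_tau : l \in lines_in tau by rewrite inE lL addsmxSl.
have ctau : #|lines_in tau| = q.+1.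
  by apply: (card_lines_in_plane rtau l_tau _ lm); rewrite inE mL addsmxSr.
have sub : lines_in tau :\ l \subset lines_in (pi + pspan m)%MS :\: lines_in pi.
  apply/subsetP => o; rewrite !inE => /andP[ol /andP[oL otau]]; rewrite oL /=.
  apply/andP; split; last by apply: submx_trans otau _; rewrite addsmxS.
  apply: contra ol => opi; apply/eqP; apply: line_eq oL lL _.
  by rewrite -tau_pi sub_capmx otau.
have := cardsD1 l (lines_in tau); rewrite ctau l_tau add1n => -[ctau_l].
have <- : lines_in tau :\ l = lines_in (pi + pspan m)%MS :\: lines_in pi.
  by apply/eqP; rewrite eqEcard sub cD ctau_l leqnn.
exact: subsetDl.
Qed.

(* A line m through x off the plane pi = l1 + l2 spans with pi a solid, which then holds
   2q+1 lines (Sd); its q lines outside pi lie in both planes l1 + m and l2 + m, hence in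
   their intersection m. *)
Lemma line_thru_off_plane_absurd k (x : 'M[F]_(k, n.+1)) l1 l2 m :
  \rank x = 1 -> l1 \in lines_thru x -> l2 \in lines_thru x -> m \in lines_thru x ->
  l1 != l2 -> ~~ (pspan m <= pspan l1 + pspan l2)%MS -> False.
Proof.
move=> rx xl1 xl2 xm l12 mpi; set pi := (pspan l1 + pspan l2)%MS in mpi.
have rpi : \rank pi = 3 := rank_lines_meet rx xl1 xl2 l12.
move: (xl1) (xl2) (xm) => /setIdP[l1L x_l1] /setIdP[l2L x_l2] /setIdP[mL x_m].
have l1_pi : l1 \in lines_in pi by rewrite inE l1L addsmxSl.
have l2_pi : l2 \in lines_in pi by rewrite inE l2L addsmxSr.
have m_off : m \in lines_in (pi + pspan m)%MS :\: lines_in pi.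
  by rewrite !inE mL mpi addsmxSr.
have rsigma : \rank (pi + pspan m)%MS = 4.
  by rewrite (mxrank_adds_line rx (submx_trans x_l1 (addsmxSl _ _)) x_m) ?rank_line ?rpi.
have cD := card_lines_off_plane rsigma (addsmxSl _ _)
  (card_lines_in_plane rpi l1_pi l2_pi l12) m_off.
have sub1 := lines_off_plane_sub rx rpi l1_pi mL x_l1 x_m mpi cD.
have sub2 := lines_off_plane_sub rx rpi l2_pi mL x_l2 x_m mpi cD.
have lm l : l \in lines_in pi -> l != m by apply: contraTneq => ->; rewrite inE mL.
have rl1m := rank_lines_meet rx xl1 xm (lm _ l1_pi).
have rl2m := rank_lines_meet rx xl2 xm (lm _ l2_pi).
have planes_m : ((pspan l1 + pspan m) :&: (pspan l2 + pspan m) :=: pspan m)%MS.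
  apply: capmx_hyper; rewrite ?addsmxSr ?rl1m ?rl2m ?rank_line //.
  apply: contra mpi => l1m_l2m; apply: submx_trans (addsmxSr (pspan l2) _) _.
  apply: submx_of_rank_leq; last by rewrite rpi rl2m.
  by rewrite addsmx_sub (submx_trans (addsmxSl _ _) l1m_l2m) addsmxSl.
have off_cap : lines_in (pi + pspan m)%MS :\: lines_in pi \subset
    lines_in ((pspan l1 + pspan m) :&: (pspan l2 + pspan m))%MS.
  apply/subsetP => o o_off; move: (subsetP sub1 o o_off) (subsetP sub2 o o_off).
  by rewrite !inE sub_capmx => /andP[-> ->] /andP[_ ->].
have := leq_trans (subset_leq_card off_cap) (card_lines_in_le1 _).
rewrite cD planes_m rank_line // => /(_ isT) q_le1.
by have := card_finNzRing_gt1 F; rewrite ltnNge q_le1.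
Qed.

Lemma lines_thru_eq_plane k (x : 'M[F]_(k, n.+1)) l1 l2 :
  \rank x = 1 -> l1 \in lines_thru x -> l2 \in lines_thru x -> l1 != l2 ->
  lines_thru x = lines_in (pspan l1 + pspan l2)%MS.
Proof.
move=> rx xl1 xl2 l12; move: (xl1) (xl2) => /setIdP[l1L _] /setIdP[l2L _].
have l1_pi : l1 \in lines_in (pspan l1 + pspan l2)%MS by rewrite inE l1L addsmxSl.
have l2_pi : l2 \in lines_in (pspan l1 + pspan l2)%MS by rewrite inE l2L addsmxSr.
apply/eqP; rewrite eqEcard (card_lines_thru rx xl1).
rewrite (card_lines_in_plane (rank_lines_meet rx xl1 xl2 l12) l1_pi l2_pi l12) leqnn andbT.
apply/subsetP => m xm; move: (xm) => /setIdP[mL _]; rewrite inE mL /=.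
by apply/negPn/negP; apply: line_thru_off_plane_absurd xl1 xl2 xm l12.
Qed.

(* The q + 1 lines through x partition the q^3 - q vectors of the plane outside x. *)
Lemma pencil_covers_plane k (x : 'M[F]_(k, n.+1)) l1 l2 (w : 'rV[F]_(n.+1)) :
  \rank x = 1 -> l1 \in lines_thru x -> l2 \in lines_thru x -> l1 != l2 ->
  (w <= pspan l1 + pspan l2)%MS -> ~~ (w <= x)%MS ->
  exists2 m, m \in L & (pspan m :=: x + w)%MS.
Proof.
move=> rx xl1 xl2 l12 w_pi wx; set pi := (pspan l1 + pspan l2)%MS in w_pi.
have pencil := lines_thru_eq_plane rx xl1 xl2 l12.
have rpi : \rank pi = 3 := rank_lines_meet rx xl1 xl2 l12.
have x_pi : (x <= pi)%MS by move: xl1 => /setIdP[_ /submx_trans]; apply; apply: addsmxSl.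
have rank_pt (v : 'rV[F]_(n.+1)) : ~~ (v <= x)%MS -> \rank v = 1.
  by rewrite rank_rV; case: eqP => // ->; rewrite sub0mx.
pose f m := mxset (pspan m) :\: mxset x.
have cover : \bigcup_(m in lines_thru x) f m = mxset pi :\: mxset x.
  apply/eqP; rewrite eqEcard; apply/andP; split.
    apply/bigcupsP => m; rewrite pencil inE => /andP[_ m_pi].
    by apply: setSD; rewrite mxset_subset.
  rewrite card_bigcup_disjoint => [|m1 m2 /setIdP[m1L xm1] /setIdP[m2L xm2] m12].
    rewrite (eq_bigr (fun=> (q ^ 2 - q)%N)) => [|m /setIdP[mL xm]].
      rewrite sum_nat_const (card_lines_thru rx xl1) cardsDS ?mxset_subset //.
      rewrite !card_mxset rpi rx; have := card_finNzRing_gt1 F; nia.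
    by rewrite cardsDS ?mxset_subset // !card_mxset rank_line // rx.
  rewrite -setI_eq0; apply/eqP/setP => v; rewrite !inE.
  apply/negP => /andP[/andP[vx vm1] /andP[_ vm2]]; case/negP: m12; apply/eqP.
  apply: (line_eq m1L m2L).
  by rewrite (line_span_points m1L rx (rank_pt _ vx) vx xm1 vm1) addsmx_sub xm2.
have : w \in mxset pi :\: mxset x by rewrite !inE w_pi wx.
rewrite -cover => /bigcupP[m /setIdP[mL xm]]; rewrite !inE => /andP[_ wm].
by exists m; last exact: line_span_points mL rx (rank_pt _ wx) wx xm wm.
Qed.

Lemma pencil_plane_avoids k1 k2 k3 (y : 'M[F]_(k1, n.+1)) (z : 'M[F]_(k2, n.+1))
    (w : 'M[F]_(k3, n.+1)) l0 lyz lzw :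
  \rank y = 1 -> l0 \in lines_thru y -> lyz \in L -> lzw \in L ->
  l0 != lyz -> lyz != lzw -> (pspan lyz :=: y + z)%MS -> (pspan lzw :=: z + w)%MS ->
  ~~ (w <= pspan l0 + pspan lyz)%MS.
Proof.
move=> ry yl0 yzL zwL l0_yz yz_zw yz zw; apply: contra yz_zw => w_pi.
have y_yz : lyz \in lines_thru y by rewrite inE yzL yz addsmxSl.
have : lzw \in lines_in (pspan l0 + pspan lyz)%MS.
  rewrite inE zwL zw addsmx_sub w_pi andbT.
  by apply: submx_trans (addsmxSr _ _); rewrite yz addsmxSr.
rewrite -(lines_thru_eq_plane ry yl0 y_yz l0_yz) inE => /andP[_ y_zw].
by apply/eqP; apply: line_eq yzL zwL _; rewrite yz addsmx_sub y_zw zw addsmxSl.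
Qed.

Lemma no_three_pencils_in_solid k k1 k2 k3 (Z : 'M[F]_(k, n.+1))
    (x : 'M[F]_(k1, n.+1)) (y : 'M[F]_(k2, n.+1)) (w : 'M[F]_(k3, n.+1)) :
  \rank Z = 4 -> \rank x = 1 -> \rank y = 1 -> \rank w = 1 ->
  ~~ (y <= x)%MS -> ~~ (w <= x)%MS -> ~~ (w <= y)%MS ->
  #|lines_thru x| = q.+1 -> #|lines_thru y| = q.+1 -> #|lines_thru w| = q.+1 ->
  lines_thru x :|: lines_thru y :|: lines_thru w \subset lines_in Z -> False.
Proof.
move=> rZ rx ry rw yx wx wy cx cy cw /subset_leq_card.
have xy := card_lines_thru2_le1 rx ry yx.
have xw := card_lines_thru2_le1 rx rw wx.
have yw := card_lines_thru2_le1 ry rw wy.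
have := cardsUI (lines_thru x) (lines_thru y).
have := cardsUI (lines_thru x :|: lines_thru y) (lines_thru w); rewrite setIUl.
have [+ _] := leq_card_setU (lines_thru x :&: lines_thru w) (lines_thru y :&: lines_thru w).
have : 1 < q := card_finNzRing_gt1 F.
by have := card_lines_in_solid rZ; rewrite !inE => /or4P[] /eqP ->; lia.
Qed.

Section Pentagon.
(* b, c, d, e, p span the points B, C, D, E, P and u spans the pentagon. *)
Variables (b c d e p u : 'M[F]_(n.+1)) (lBC lCD lDE : {set V}).
Hypotheses (rb : \rank b = 1) (rc : \rank c = 1) (rd : \rank d = 1).
Hypotheses (re : \rank e = 1) (rp : \rank p = 1).
Hypotheses (BC_L : lBC \in L) (CD_L : lCD \in L) (DE_L : lDE \in L).
Hypotheses (BC_bc : (pspan lBC :=: b + c)%MS) (CD_cd : (pspan lCD :=: c + d)%MS).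
Hypothesis (DE_de : (pspan lDE :=: d + e)%MS).
Hypotheses (BC_CD : lBC != lCD) (CD_DE : lCD != lDE) (dc : ~~ (d <= c)%MS).
Hypotheses (pb : ~~ (p <= b)%MS) (pe : ~~ (p <= e)%MS) (p_be : (p <= b + e)%MS).
Hypotheses (ru : \rank u <= 5) (bu : (b <= u)%MS) (cu : (c <= u)%MS) (du : (d <= u)%MS).
Hypotheses (p_u : lines_thru p \subset lines_in u) (cp : #|lines_thru p| = q.+1).

Local Notation piC := (pspan lBC + pspan lCD)%MS.
Local Notation piD := (pspan lDE + pspan lCD)%MS.

Let c_BC : lBC \in lines_thru c. Proof. by rewrite inE BC_L BC_bc addsmxSr. Qed.
Let c_CD : lCD \in lines_thru c. Proof. by rewrite inE CD_L CD_cd addsmxSl. Qed.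
Let d_CD : lCD \in lines_thru d. Proof. by rewrite inE CD_L CD_cd addsmxSr. Qed.
Let d_DE : lDE \in lines_thru d. Proof. by rewrite inE DE_L DE_de addsmxSl. Qed.

Let pencil_c : lines_thru c = lines_in piC.
Proof. exact: lines_thru_eq_plane rc c_BC c_CD BC_CD. Qed.

Let pencil_d : lines_thru d = lines_in piD.
Proof. by apply: lines_thru_eq_plane rd d_DE d_CD _; rewrite eq_sym. Qed.

Lemma p_off_planeC : ~~ (p <= piC)%MS.
Proof.
have := pencil_plane_avoids rc c_BC CD_L DE_L BC_CD CD_DE CD_cd DE_de.
apply: contra => p_piC; apply: submx_trans (point_exchange rb re rp pb p_be) _.
by rewrite addsmx_sub p_piC andbT; apply: submx_trans (addsmxSl _ _); rewrite BC_bc addsmxSl.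
Qed.

Lemma p_off_planeD : ~~ (p <= piD)%MS.
Proof.
have DC_dc : (pspan lCD :=: d + c)%MS by rewrite -addsmxC.
have CB_cb : (pspan lBC :=: c + b)%MS by rewrite -addsmxC.
have DE_CD : lDE != lCD by rewrite eq_sym.
have CD_BC : lCD != lBC by rewrite eq_sym.
have := pencil_plane_avoids rd d_DE CD_L BC_L DE_CD CD_BC DC_dc CB_cb.
have p_eb : (p <= e + b)%MS by rewrite addsmxC.
apply: contra => p_piD; apply: submx_trans (point_exchange re rb rp pe p_eb) _.
by rewrite addsmx_sub p_piD andbT; apply: submx_trans (addsmxSl _ _); rewrite DE_de addsmxSr.
Qed.

Lemma line_thru_p_meets_planeC :
  exists (w : 'rV[F]_(n.+1)) mP,
    [/\ (w <= piC)%MS, ~~ (w <= p)%MS, mP \in L & (pspan mP :=: p + w)%MS].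
Proof.
have [l1 [l2 [pl1 pl2 l12]]] :
    exists l1 l2, [/\ l1 \in lines_thru p, l2 \in lines_thru p & l1 != l2].
  by apply/card_gt1P; rewrite cp ltnS ltnW // card_finNzRing_gt1.
have rpiP := rank_lines_meet rp pl1 pl2 l12.
have rpiC := rank_lines_meet rc c_BC c_CD BC_CD.
have piP_u : (pspan l1 + pspan l2 <= u)%MS.
  by move: (subsetP p_u _ pl1) (subsetP p_u _ pl2); rewrite !inE addsmx_sub => /andP[_ ->] /andP[_ ->].
have piC_u : (piC <= u)%MS by rewrite addsmx_sub BC_bc CD_cd !addsmx_sub bu cu du.
have [w w_cap w0] : exists2 w : 'rV[F]_(n.+1),
    (w <= (pspan l1 + pspan l2) :&: piC)%MS & w != 0%R.
  apply/rowV0Pn; rewrite -mxrank_eq0.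
  have sum_u : (pspan l1 + pspan l2 + piC <= u)%MS by rewrite addsmx_sub piP_u.
  apply/eqP => cap0; have := mxrank_sum_cap (pspan l1 + pspan l2)%MS piC.
  by rewrite rpiP rpiC cap0 addn0 => sum6; have := leq_trans (mxrankS sum_u) ru; rewrite sum6.
move: w_cap; rewrite sub_capmx => /andP[w_piP w_piC].
have wp : ~~ (w <= p)%MS.
  apply: contra p_off_planeC => wp; apply: submx_trans w_piC.
  by apply: submx_of_rank_leq wp _; rewrite rp rank_rV w0.
have [mP mPL mP_pw] := pencil_covers_plane rp pl1 pl2 l12 w_piP wp.
by exists w, mP.
Qed.

Lemma pentagon_absurd : False.
Proof.
have [w [mP [w_piC wp mPL mP_pw]]] := line_thru_p_meets_planeC.
have rw : \rank w = 1 by rewrite rank_rV; case: eqP wp => // ->; rewrite sub0mx.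
have p_mP : (p <= pspan mP)%MS by rewrite mP_pw addsmxSl.
have w_mP : (w <= pspan mP)%MS by rewrite mP_pw addsmxSr.
have mP_off (pi : 'M[F]_(n.+1)) : ~~ (p <= pi)%MS -> mP \notin lines_in pi.
  by apply: contra; rewrite inE => /andP[_]; apply: submx_trans p_mP.
have w_off (y pi : 'M[F]_(n.+1)) : \rank y = 1 -> lines_thru y = lines_in pi -> ~~ (p <= pi)%MS ->
    ~~ (w <= y)%MS.
  move=> ry pencil_y /mP_off; apply: contra => wy; rewrite -pencil_y inE mPL.
  by apply: submx_trans w_mP; apply: submx_of_rank_leq wy _; rewrite ry rw.
have wc := w_off c _ rc pencil_c p_off_planeC.
have wd := w_off d _ rd pencil_d p_off_planeD.
have [mC mCL mC_cw] := pencil_covers_plane rc c_BC c_CD BC_CD w_piC wc.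
have c_mC : mC \in lines_thru c by rewrite inE mCL mC_cw addsmxSl.
have w_mP_mC : mP != mC.
  by apply: contraNneq (mP_off _ p_off_planeC) => ->; rewrite -pencil_c.
have pencil_w : lines_thru w = lines_in (pspan mP + pspan mC)%MS.
  by apply: lines_thru_eq_plane; rewrite // inE ?mPL ?mCL ?w_mP ?mC_cw ?addsmxSr.
have rZ : \rank (piC + p)%MS = 4.
  by rewrite (mxrank_adds_point rp p_off_planeC) (rank_lines_meet rc c_BC c_CD BC_CD).
have piC_Z : (piC <= piC + p)%MS := addsmxSl _ _.
have p_Z : (p <= piC + p)%MS := addsmxSr _ _.
have CD_Z : (pspan lCD <= piC + p)%MS := submx_trans (addsmxSr _ _) piC_Z.
have c_Z : (c <= piC + p)%MS by apply: submx_trans CD_Z; rewrite CD_cd addsmxSl.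
have d_Z : (d <= piC + p)%MS by apply: submx_trans CD_Z; rewrite CD_cd addsmxSr.
have b_Z : (b <= piC + p)%MS.
  by apply: submx_trans piC_Z; apply: submx_trans (addsmxSl _ _); rewrite BC_bc addsmxSl.
have e_Z : (e <= piC + p)%MS.
  by apply: submx_trans (point_exchange rb re rp pb p_be) _; rewrite addsmx_sub b_Z.
have w_Z : (w <= piC + p)%MS := submx_trans w_piC piC_Z.
have w_thru_mP : mP \in lines_thru w by rewrite inE mPL w_mP.
apply: (no_three_pencils_in_solid rZ rc rd rw dc wc wd).
- exact: card_lines_thru rc c_BC.
- exact: card_lines_thru rd d_CD.
- exact: card_lines_thru rw w_thru_mP.
rewrite pencil_c pencil_d pencil_w !subUset !lines_inS //.
  by rewrite addsmx_sub mP_pw mC_cw !addsmx_sub p_Z w_Z c_Z.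
by rewrite addsmx_sub CD_Z DE_de addsmx_sub d_Z e_Z.
Qed.

End Pentagon.
End LineSet.

Theorem proposition1 (F : finFieldType) (n : nat)
  (L : {set {set 'rV[F]_(n.+1)}}) :
  let q := #|F| in
  (forall l, l \in L -> is_line l) ->
  L != set0 ->
  (* (Pt) *)
  (forall P, is_point P ->
     #|[set l in L | P \subset l]| \in [:: 0; q.+1]) ->
  (* (Pl) *)
  (forall p, is_plane p ->
     #|[set l in L | l \subset p]| \in [:: 0; 1; q.+1]) ->
  (* (Sd) *)
  (forall s, is_solid s ->
     #|[set l in L | l \subset s]| \in [:: 0; 1; q.+1; (2 * q).+1]) ->
  (* (To) *)
  #|L| <= q ^ 5 + q ^ 4 + q ^ 3 + q ^ 2 + q + 1 ->
  forall A B C D E : {set 'rV[F]_(n.+1)},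
  is_point A -> is_point B -> is_point C -> is_point D -> is_point E ->
  uniq [:: A; B; C; D; E] ->
  let AB := pclosure (A :|: B) in
  let BC := pclosure (B :|: C) in
  let CD := pclosure (C :|: D) in
  let DE := pclosure (D :|: E) in
  let EA := pclosure (E :|: A) in
  AB \in L -> BC \in L -> CD \in L -> DE \in L -> EA \in L ->
  uniq [:: AB; BC; CD; DE; EA] ->
  let U := pclosure (A :|: B :|: C :|: D :|: E) in
  forall P, is_point P -> P \subset pclosure (B :|: E) ->
    #|[set l in L | (P \subset l) && (l \subset U)]| = q.+1 ->
    P = B \/ P = E.
Proof.
move=> q Llines _ Pt Pl Sd _ A B C D E pA pB pC pD pE uP AB BC CD DE EA _ BC_L CD_L DE_L _
  uL U P pP P_BE P_U.
have [->|PB] := eqVneq P B; first by left.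
have [->|PE] := eqVneq P E; first by right.
exfalso; move: uP uL; rewrite /= !inE !negb_or.
move=> /and5P[_ _ /andP[CD_ne _] _ _] /and5P[_ /and3P[BC_CD _ _] /andP[CD_DE _] _ _].
move: P_U; rewrite /U lines_thru_in_pclosure // => /(lines_thru_sub_of_card Llines Pt).
case=> [|p_u cp]; first exact: psub_rank pP.
have ru : \rank (pspan (A :|: B :|: C :|: D :|: E)) <= 5.
  apply: (@leq_trans (\rank (pspan A) + \rank (pspan B) + \rank (pspan C) +
                      \rank (pspan D) + \rank (pspan E))).
    by do 3!apply: (leq_trans (mxrank_pspanU _ _) (leq_add _ (leqnn _))); apply: mxrank_pspanU.
  by rewrite (psub_rank pA) (psub_rank pB) (psub_rank pC) (psub_rank pD) (psub_rank pE).
apply: (pentagon_absurd Llines Pt Pl Sd (psub_rank pB) (psub_rank pC) (psub_rank pD)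
  (psub_rank pE) (psub_rank pP) BC_L CD_L DE_L (pspan_pclosureU _ _) (pspan_pclosureU _ _)
  (pspan_pclosureU _ _) BC_CD CD_DE _ (psub_neq pP pB PB) (psub_neq pP pE PE) _ ru _ _ _ p_u cp).
- by apply: (psub_neq pD pC); rewrite eq_sym.
- by rewrite -pspanU -(psub_subset _ pP).
all: by apply/pspanS/subsetP => v vX; rewrite !inE vX !orbT.
Qed.
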